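(* Consider Janus Quicksort (JQuick), as described in the context, run on $n$ elements with distinct keys distributed over $p$ processes with $n/p$ elements each. With probability $1-O(p^{-6})$, JQuick executes only $O(\log p)$ distributed levels of recursion (equivalently, it executes more than $O(\log p)$ distributed levels of recursion with probability $O(p^{-6})$).
   Context: Janus Quicksort (JQuick) is a recursive distributed-memory sorting algorithm. The input is $n$ elements with pairwise distinct keys, distributed over $p$ processes numbered $0,\dots,p-1$ with exactly $n/p$ elements per process ($n$ a multiple of $p$). The algorithm maintains tasks; a task is a contiguous range of processes together with a contiguous range of the global sorted order of elements that these processes jointly hold, every process holding exactly $n/p$ elements in total, summed over all tasks it belongs to. A process may belong to two tasks at once (a ''janus process''), and it then processes both simultaneously. One distributed level of recursion on a task performs four steps: (1) pivot selection: an element of the task chosen uniformly at random is broadcast to all processes of the task; (2) partitioning: each process splits its elements of the task into small elements (smaller than the pivot) and large elements (at least the pivot); (3) data assignment: using prefix sums and broadcasts, the small elements are assigned to a left group consisting of an initial segment of the task's processes and the large elements to a right group consisting of a final segment, such that every process again holds exactly $n/p$ elements in total; the two groups share at most one process (a janus process); (4) data exchange: elements are sent to their assigned processes. Then the left group recursively sorts the small elements and the right group the large elements. A task covering only one or two processes is a base case; base cases are not split further but sorted in a second phase. The number of distributed levels of recursion is the depth of this recursion (excluding the base-case phase). *)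

From mathcomp Require Import all_boot all_order all_algebra.
Set Implicit Arguments. Unset Strict Implicit. Unset Printing Implicit Defensive.
Import Order.TTheory GRing.Theory Num.Theory.
Local Open Scope ring_scope.

Definition dist (A : Type) := seq (rat * A).
Definition dret (A : Type) (a : A) : dist A := [:: (1, a)].
Definition dbind (A B : Type) (m : dist A) (f : A -> dist B) : dist B :=
  flatten [seq [seq (w.1 * v.1, v.2) | v <- f w.2] | w <- m].
Definition dunif (s e : nat) : dist nat :=
  [seq (((e - s)%N)%:R^-1, r) | r <- iota s (e - s)].
Definition dprob (A : Type) (m : dist A) (P : pred A) : rat :=
  \sum_(w <- m | P w.2) w.1.

(* ---------- Model of JQuick ------------------------------------------------
   Keys are distinct, so elements are identified with their global rank
   0..n-1.  Process i owns the n/p global slots [i*k, (i+1)*k), k = n/p.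
   A task is a contiguous slot range [s, e): its elements are exactly those
   of ranks s..e-1, and its processes are the processes whose slot block meets
   [s, e).  Choosing the pivot of rank r (uniformly in [s, e)), the small
   elements (ranks s..r-1) are assigned to the slots [s, r) (left group) and
   the large ones (ranks r..e-1) to the slots [r, e) (right group). *)

Definition nprocs (k s e : nat) : nat :=
  if (e <= s)%N then 0%N else ((e.-1 %/ k - s %/ k).+1)%N.

Definition is_base (k s e : nat) : bool := (nprocs k s e <= 2)%N.

(* distribution of min(depth, d) of the distributed recursion started on task
   [s, e), where depth = number of distributed levels (base cases excluded);
   the two subtasks use independent random pivots. *)
Fixpoint levels (k d s e : nat) : dist nat :=
  match d with
  | 0 => dret 0%N
  | d'.+1 =>
    if is_base k s e then dret 0%N
    else dbind (dunif s e) (fun r =>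
         dbind (levels k d' s r) (fun a =>
         dbind (levels k d' r e) (fun b => dret (maxn a b).+1)))
  end.

(* probability that JQuick on n elements over p processes executes more than
   D distributed levels of recursion (depends only on the first D+1 levels) *)
Definition jquick_exceeds (n p D : nat) : rat :=
  dprob (levels (n %/ p) D.+1 0 n) (fun t => (D < t)%N).

From mathcomp Require Import all_boot all_order all_algebra.
From mathcomp Require Import zify ring lra.
Set Implicit Arguments. Unset Strict Implicit. Unset Printing Implicit Defensive.
Import Order.TTheory GRing.Theory Num.Theory.
Local Open Scope ring_scope.

(* A task whose slot range has size m carries the potential (m / k)^2, where
   k = n / p.  A task that is not a base case spans at least three processes,
   so m > k + 1 and its potential exceeds 1.  A uniform pivot splits m into r
   and m - r with E[r^2 + (m - r)^2] = (2 m^2 + 1) / 3 <= 3/4 m^2 for m >= 2;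
   with the union bound over the two subtasks, the probability of reaching
   depth d + 1 is therefore at most (3/4)^d times the initial potential p^2,
   which is at most 2^8 / p^6 for d = 24 log p. *)

Lemma dprobE (A : Type) (m : dist A) P : dprob m P = \sum_(w <- m) w.1 * (P w.2)%:R.
Proof.
rewrite /dprob big_mkcond; apply: eq_bigr => w _.
by case: (P w.2); rewrite ?mulr1 ?mulr0.
Qed.

Lemma dprob_ret (A : Type) (a : A) P : dprob (dret a) P = (P a)%:R.
Proof. by rewrite dprobE /dret big_seq1 mul1r. Qed.

Lemma dprob_bind (A B : Type) (m : dist A) (f : A -> dist B) P :
  dprob (dbind m f) P = \sum_(w <- m) w.1 * dprob (f w.2) P.
Proof.
rewrite /dprob /dbind big_flatten /= big_map; apply: eq_bigr => w _.
by rewrite big_map /= mulr_sumr.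
Qed.

Lemma dprob_bind_ret (A B : Type) (m : dist A) (f : A -> B) P :
  dprob (dbind m (fun a => dret (f a))) P = dprob m (fun a => P (f a)).
Proof.
rewrite dprob_bind dprobE; apply: eq_bigr => w _.
by rewrite dprob_ret.
Qed.

Lemma dprob_unif s e P :
  dprob (dunif s e) P = \sum_(s <= r < e) ((e - s)%N)%:R^-1 * (P r)%:R.
Proof. by rewrite dprobE /dunif big_map. Qed.

Definition subprob (A : eqType) (m : dist A) :=
  all (fun w => 0 <= w.1) m && (dprob m predT <= 1).

Lemma dprob_ge0 (A : eqType) (m : dist A) P : subprob m -> 0 <= dprob m P.
Proof.
case/andP=> /allP m_ge0 _; rewrite /dprob big_seq_cond.
by apply: sumr_ge0 => w /andP[/m_ge0].
Qed.

Lemma dprob_subpred (A : eqType) (m : dist A) (P Q : pred A) : subprob m ->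
  subpred P Q -> dprob m P <= dprob m Q.
Proof.
case/andP=> /allP m_ge0 _ PQ; rewrite !dprobE !big_seq.
apply: ler_sum => w /m_ge0 w_ge0; apply: ler_wpM2l => //.
by case: (boolP (P w.2)) => [/PQ ->|].
Qed.

Lemma dprob_le1 (A : eqType) (m : dist A) P : subprob m -> dprob m P <= 1.
Proof.
move=> m_sub; apply: le_trans (dprob_subpred m_sub (fun _ _ => isT)) _.
by case/andP: m_sub.
Qed.

Lemma subprob_ret (A : eqType) (a : A) : subprob (dret a).
Proof. by rewrite /subprob /= dprob_ret. Qed.

Lemma subprob_bind (A B : eqType) (m : dist A) (f : A -> dist B) :
  subprob m -> (forall a, subprob (f a)) -> subprob (dbind m f).
Proof.
move=> m_sub f_sub; have /andP[/allP m_ge0 m_le1] := m_sub; apply/andP; split.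
  apply/allP => v /flattenP [l /mapP [w wm ->]] /mapP [u uf ->] /=.
  have /andP[/allP fw_ge0 _] := f_sub w.2.
  by rewrite mulr_ge0 ?m_ge0 ?fw_ge0.
rewrite dprob_bind; apply: le_trans m_le1; rewrite dprobE !big_seq.
apply: ler_sum => w wm; rewrite mulr1 ler_piMr ?m_ge0 //.
exact: dprob_le1.
Qed.

Lemma subprob_unif s e : subprob (dunif s e).
Proof.
apply/andP; split.
  by apply/allP => w /mapP [r _ ->] /=; rewrite invr_ge0 ler0n.
rewrite dprob_unif.
under eq_bigr do rewrite mulr1.
rewrite sumr_const_nat.
case: (e - s)%N => [|m]; first by rewrite mulr0n ler01.
by rewrite -[X in X <= _]mulr_natr mulVf ?pnatr_eq0.
Qed.

Lemma dprob_union (A B : eqType) (C : Type) (m1 : dist A) (m2 : dist B)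
    (f : A -> B -> C) (P : pred C) (P1 : pred A) (P2 : pred B) :
  subprob m1 -> subprob m2 -> (forall a b, P (f a b) -> P1 a || P2 b) ->
  dprob (dbind m1 (fun a => dbind m2 (fun b => dret (f a b)))) P
    <= dprob m1 P1 + dprob m2 P2.
Proof.
move=> m1_sub m2_sub PP12.
have inner a : dprob (dbind m2 (fun b => dret (f a b))) P
               <= (P1 a)%:R + dprob m2 P2.
  rewrite dprob_bind_ret; case: (boolP (P1 a)) => [_ | nP1a] /=.
    by apply: le_trans (dprob_le1 _ m2_sub) _; rewrite mulr1n lerDl dprob_ge0.
  rewrite mulr0n add0r; apply: dprob_subpred => // b /PP12.
  by rewrite (negbTE nP1a).
have /andP[/allP m1_ge0 m1_le1] := m1_sub.
rewrite dprob_bind; apply: le_trans (_ : \sum_(w <- m1) w.1 *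
  ((P1 w.2)%:R + dprob m2 P2) <= _).
  by rewrite !big_seq; apply: ler_sum => w wm; rewrite ler_wpM2l ?m1_ge0.
under eq_bigr do rewrite mulrDr.
rewrite big_split /= -dprobE -mulr_suml lerD2l ler_piMl ?dprob_ge0 //.
Qed.

Lemma is_base0 s e : is_base 0 s e.
Proof. by rewrite /is_base /nprocs !divn0; case: ifP. Qed.

Lemma nonbase_size k s e : ~~ is_base k s e -> (k.+1 < e - s)%N.
Proof.
case: (posnP k) => [-> | k_gt0]; first by rewrite is_base0.
rewrite /is_base /nprocs; case: (leqP e s) => //= lt_se blocks.
have := divn_eq s k; have := divn_eq e.-1 k.
have := ltn_pmod s k_gt0; have := ltn_pmod e.-1 k_gt0.
have : ((s %/ k).+2 * k <= e.-1 %/ k * k)%N by rewrite leq_mul2r; lia.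
rewrite !mulSn.
move: (s %/ k * k)%N (e.-1 %/ k * k)%N (s %% k)%N (e.-1 %% k)%N => a b c d.
lia.
Qed.

Lemma subprob_levels k d s e : subprob (levels k d s e).
Proof.
elim: d s e => [|d IH] s e /=; first exact: subprob_ret.
case: ifP => _; first exact: subprob_ret.
apply: subprob_bind (subprob_unif s e) _ => r.
apply: subprob_bind (IH s r) _ => a.
apply: subprob_bind (IH r e) _ => b.
exact: subprob_ret.
Qed.

Definition reach_prob k d s e := dprob (levels k d s e) (fun t => (d <= t)%N).

Lemma jquick_exceedsE n p D :
  jquick_exceeds n p D = reach_prob (n %/ p) D.+1 0 n.
Proof. by []. Qed.

Lemma reach_prob_base k d s e : is_base k s e -> reach_prob k d.+1 s e = 0.
Proof. by move=> base; rewrite /reach_prob /= base dprob_ret. Qed.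

Lemma reach_prob_le1 k d s e : reach_prob k d s e <= 1.
Proof. exact/dprob_le1/subprob_levels. Qed.

Lemma reach_probS k d s e : ~~ is_base k s e ->
  reach_prob k d.+1 s e <=
  \sum_(s <= r < e) ((e - s)%N)%:R^-1 * (reach_prob k d s r + reach_prob k d r e).
Proof.
move=> nonbase; rewrite /reach_prob /= (negbTE nonbase) dprob_bind /dunif big_map.
apply: ler_sum => r _; rewrite ler_wpM2l ?invr_ge0 ?ler0n //.
apply: dprob_union; rewrite ?subprob_levels // => a b.
by rewrite ltnS leq_max.
Qed.

Lemma sum_sqr_nat m : (6 * \sum_(0 <= i < m) i ^ 2 + 3 * m ^ 2 = 2 * m ^ 3 + m)%N.
Proof.
elim: m => [|m IH]; first by rewrite big_geq.
by rewrite big_nat_recr //=; nia.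
Qed.

Lemma sum_split_sqr s e :
  (3 * \sum_(s <= r < e) ((r - s) ^ 2 + (e - r) ^ 2) = 2 * (e - s) ^ 3 + (e - s))%N.
Proof.
have [le_es | lt_se] := leqP e s.
  by rewrite big_geq // (eqP le_es) muln0.
have [m ->] : exists m, e = (s + m)%N by exists (e - s)%N; lia.
rewrite addKn -{1}(add0n s) big_addn addKn.
have -> : (\sum_(0 <= i < m) ((i + s - s) ^ 2 + (s + m - (i + s)) ^ 2)
         = \sum_(0 <= i < m) i ^ 2 + \sum_(0 <= i < m) (m - i) ^ 2)%N.
  rewrite -big_split; apply: eq_big_nat => i /andP[_ lt_im] /=.
  by rewrite addnK (addnC i) subnDl.
have -> : (\sum_(0 <= i < m) (m - i) ^ 2 = \sum_(0 <= i < m) i ^ 2 + m ^ 2)%N.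
  rewrite big_nat_rev -big_nat_recr // big_nat_recl // exp0n // add0n /=.
  by apply: eq_big_nat => i /andP[_ lt_im]; congr (_ ^ 2)%N; lia.
have := sum_sqr_nat m; lia.
Qed.

Lemma avg_split_sqr_le s e : (2 <= e - s)%N ->
  ((e - s)%N)%:R^-1 * (\sum_(s <= r < e) ((r - s) ^ 2 + (e - r) ^ 2))%N%:R
  <= 3 / 4 * ((e - s)%N)%:R ^+ 2 :> rat.
Proof.
move=> size_ge2; move: (sum_split_sqr s e).
move: (\sum_(s <= r < e) _)%N (e - s)%N size_ge2 => S m m_ge2 sumE.
have sumR : (3 * S)%N%:R = (2 * m ^ 3 + m)%N%:R :> rat by rewrite sumE.
rewrite natrD !natrM in sumR.
have cube_ge : 4 * m%:R <= m%:R ^+ 3 :> rat.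
  by rewrite -natrX -natrM ler_nat; nia.
rewrite ler_pdivrMl ?ltr0n; last by lia.
rewrite mulrCA -exprS; lra.
Qed.

Lemma reach_prob_le k d s e :
  reach_prob k d.+1 s e <= (3 / 4) ^+ d * (((e - s)%N)%:R / k%:R) ^+ 2.
Proof.
elim: d s e => [|d IH] s e; have [base | nonbase] := boolP (is_base k s e);
  try by rewrite reach_prob_base // mulr_ge0 ?exprn_ge0 ?divr_ge0.
all: have size_gt := nonbase_size nonbase.
  have k_gt0 : (0 < k)%N.
    by rewrite lt0n; apply: contraNneq nonbase => ->; apply: is_base0.
  rewrite expr0 mul1r; apply: le_trans (reach_prob_le1 _ _ _ _) _.
  by rewrite exprn_ege1 // ler_pdivlMr ?ltr0n // mul1r ler_nat; lia.
apply: le_trans (reach_probS _ nonbase) _.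
pose c : rat := (3 / 4) ^+ d / k%:R ^+ 2.
have cE (x : rat) : c * x ^+ 2 = (3 / 4) ^+ d * (x / k%:R) ^+ 2.
  by rewrite (exprMn 2 x) exprVn /c; ring.
apply: le_trans (_ : _ <= \sum_(s <= r < e) ((e - s)%N)%:R^-1 *
  (c * ((r - s)%N)%:R ^+ 2 + c * ((e - r)%N)%:R ^+ 2)) _.
  apply: ler_sum => r _; rewrite ler_wpM2l ?invr_ge0 ?ler0n //.
  by rewrite !cE lerD ?IH.
have -> : \sum_(s <= r < e) ((e - s)%N)%:R^-1 *
    (c * ((r - s)%N)%:R ^+ 2 + c * ((e - r)%N)%:R ^+ 2)
  = c * (((e - s)%N)%:R^-1 *
         (\sum_(s <= r < e) ((r - s) ^ 2 + (e - r) ^ 2))%N%:R).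
  rewrite natr_sum !mulr_sumr; apply: eq_bigr => r _.
  by rewrite natrD !natrX; ring.
have c_ge0 : 0 <= c by rewrite /c divr_ge0 ?exprn_ge0.
by rewrite exprS -mulrA -cE (mulrCA (3 / 4)) ler_wpM2l // avg_split_sqr_le //; lia.
Qed.

Lemma natr_div_divn_le n p : (p %| n)%N -> n%:R / (n %/ p)%:R <= p%:R :> rat.
Proof.
move=> p_dvd_n; have [-> | q_gt0] := posnP (n %/ p).
  by rewrite invr0 mulr0 ler0n.
by rewrite -{1}(divnK p_dvd_n) natrM mulrAC mulfV ?mul1r // pnatr_eq0 -lt0n.
Qed.

Lemma trunc_log_decay p :
  p%:R ^+ 8 * (3 / 4) ^+ (24 * trunc_log 2 p) <= 2%:R ^+ 8 :> rat.
Proof.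
set t := trunc_log 2 p.
have p_lt : (p < 2 ^ t.+1)%N := trunc_log_ltn p (isT : (1 < 2)%N).
have p8_le : p%:R ^+ 8 <= (2%:R ^+ 8) ^+ t.+1 :> rat.
  rewrite -exprM mulnC exprM -!natrX ler_nat.
  by rewrite leq_exp2r // ltnW.
have q_ge0 : 0 <= 3 / 4 :> rat by lra.
have w_ge0 : 0 <= 2%:R ^+ 8 :> rat := exprn_ge0 8 (ler0n _ 2).
have base_le1 : 2%:R ^+ 8 * (3 / 4) ^+ 24 <= 1 :> rat.
  by rewrite (exprM _ 3 8) -exprMn; apply: exprn_ile1; rewrite !exprS expr0; lra.
apply: (le_trans (ler_wpM2r (exprn_ge0 _ q_ge0) p8_le)).
rewrite (exprS (2%:R ^+ 8)) exprM -mulrA -exprMn; apply: (ler_piMr w_ge0).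
exact: exprn_ile1 (mulr_ge0 w_ge0 (exprn_ge0 _ q_ge0)) base_le1.
Qed.

Theorem lemma2 :
  exists (C : nat) (c : rat) (p0 : nat),
    forall p n : nat, (p0 <= p)%N -> (p %| n)%N ->
      jquick_exceeds n p (C * trunc_log 2 p)%N <= c / (p%:R ^+ 6).
Proof.
exists 24%N, (2%:R ^+ 8), 1%N => p n p_gt0 p_dvd_n.
have p_pos : 0 < p%:R :> rat by rewrite ltr0n.
rewrite jquick_exceedsE ler_pdivlMr; last exact: exprn_gt0.
apply: le_trans (ler_wpM2r (exprn_ge0 6 (ltW p_pos)) (reach_prob_le _ _ _ _)) _.
set q := (3 / 4 : rat) ^+ _; have q_gt0 : 0 < q by rewrite exprn_gt0; lra.
apply: le_trans (_ : q * p%:R ^+ 2 * p%:R ^+ 6 <= _).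
  rewrite ler_pM2r ?exprn_gt0 // ler_pM2l // subn0.
  by rewrite lerXn2r ?natr_div_divn_le // nnegrE ?ler0n // divr_ge0.
have -> : q * p%:R ^+ 2 * p%:R ^+ 6 = p%:R ^+ 8 * q by ring.
exact: trunc_log_decay.
Qed.
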